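(* Let $(A,\mathfrak m,k)$ be a commutative Noetherian local ring and let $C$ be a totally acyclic complex of finitely generated free $A$-modules. Then $C$ is contractible at $n$ for some $n\in\mathbb Z$ if and only if $C$ is contractible.
   Context: A complex $C$ of finitely generated free $A$-modules is totally acyclic if $H(C)=0$ and $H(\operatorname{Hom}_A(C,A))=0$. $C$ is contractible at $n$ if there exist $A$-linear maps $s_n:C_n\to C_{n+1}$ and $s_{n-1}:C_{n-1}\to C_n$ such that $\partial^C_{n+1}s_n+s_{n-1}\partial^C_n:C_n\to C_n$ is an isomorphism. $C$ is contractible if there exist maps $s_n:C_n\to C_{n+1}$ for all $n$ such that $s_n,s_{n-1}$ give contractibility at $n$ for every $n$ (equivalently, the identity of $C$ is null-homotopic). *)

From HB Require Import structures.
From mathcomp Require Import all_boot all_order all_algebra.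
Set Implicit Arguments. Unset Strict Implicit. Unset Printing Implicit Defensive.
Import Order.TTheory GRing.Theory Num.Theory.
Local Open Scope ring_scope.

Definition is_ideal (A : comUnitRingType) (I : A -> Prop) : Prop :=
  [/\ I 0, (forall x y, I x -> I y -> I (x + y)) & (forall a x, I x -> I (a * x))].

Definition fin_gen_ideal (A : comUnitRingType) (I : A -> Prop) : Prop :=
  exists s : seq A, forall x,
    I x <-> exists c : 'I_(size s) -> A, x = \sum_(i < size s) c i * s`_i.

Definition noetherian (A : comUnitRingType) : Prop :=
  forall I : A -> Prop, is_ideal I -> fin_gen_ideal I.

(* Local ring: (A is nontrivial, built into comUnitRingType, and) the
   non-units are closed under addition, i.e. they form the unique maximal ideal. *)
Definition local_ring (A : comUnitRingType) : Prop :=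
  forall x y : A, x \notin GRing.unit -> y \notin GRing.unit ->
    (x + y) \notin GRing.unit.

(* A complex of finitely generated free A-modules indexed by Z:
   C_n = A^(rk n) (column vectors), and
   bd n : C_(n+1) -> C_n is the differential  ∂_(n+1), as an
   (rk n) x (rk (n+1)) matrix acting on column vectors. *)
Record fcomplex (A : comUnitRingType) := FComplex {
  rk : int -> nat;
  bd : forall n : int, 'M[A]_(rk n, rk (n + 1));
  bd_sq : forall n : int, bd n *m bd (n + 1) = 0
}.

Definition acyclic (A : comUnitRingType) (C : fcomplex A) : Prop :=
  forall (n : int) (v : 'cV[A]_(rk C (n + 1))),
    bd C n *m v = 0 ->
    exists w : 'cV[A]_(rk C (n + 1 + 1)), v = bd C (n + 1) *m w.

(* H(Hom_A(C,A)) = 0 : Hom_A(A^r, A) is identified with row vectors, and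
   Hom(∂, A) is precomposition, i.e. right multiplication of row vectors. *)
Definition dual_acyclic (A : comUnitRingType) (C : fcomplex A) : Prop :=
  forall (n : int) (u : 'rV[A]_(rk C (n + 1))),
    u *m bd C (n + 1) = 0 ->
    exists w : 'rV[A]_(rk C n), u = w *m bd C n.

Definition totally_acyclic (A : comUnitRingType) (C : fcomplex A) : Prop :=
  acyclic C /\ dual_acyclic C.

(* Contractibility at the module C_(m+1): maps
   s' : C_(m+1) -> C_(m+2) and s : C_m -> C_(m+1) with
   ∂_(m+2) s' + s ∂_(m+1) an isomorphism of C_(m+1). *)
Definition contractible_at_succ (A : comUnitRingType) (C : fcomplex A) (m : int) : Prop :=
  exists (s' : 'M[A]_(rk C (m + 1 + 1), rk C (m + 1)))
         (s : 'M[A]_(rk C (m + 1), rk C m)),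
    bd C (m + 1) *m s' + s *m bd C m \in unitmx.

(* C is contractible at n  (C_n = C_((n-1)+1)). *)
Definition contractible_at (A : comUnitRingType) (C : fcomplex A) (n : int) : Prop :=
  contractible_at_succ C (n - 1).

Definition contractible (A : comUnitRingType) (C : fcomplex A) : Prop :=
  exists s : forall n : int, 'M[A]_(rk C (n + 1), rk C n),
    forall m : int, bd C (m + 1) *m s (m + 1) + s m *m bd C m \in unitmx.

From mathcomp Require Import all_boot all_order all_algebra zify.
Set Implicit Arguments. Unset Strict Implicit. Unset Printing Implicit Defensive.
Import GRing.Theory.
Local Open Scope ring_scope.

(* Contractibility of C is equivalent to every differential being von Neumann
   regular (d s d = d for some s).  Contractibility at one degree makes one
   differential regular: d h = (d s) d for the invertible h, and a
   Cayley-Hamilton argument turns d = (d s) d h^-1 into d = (d s) P d.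
   Acyclicity propagates regularity to the next differential and acyclicity of
   the dual to the previous one; from regular splittings of all differentials
   one assembles a contracting homotopy. *)

Section MatrixLemmas.
Variable A : comUnitRingType.

Lemma horner_mx_coef n (H : 'M[A]_n.+1) (q : {poly A}) :
  horner_mx H q = \sum_(i < size q) q`_i *: H ^+ i.
Proof.
rewrite -[in LHS](coefK q) poly_def linear_sum; apply: eq_bigr => i _.
by rewrite linearZ rmorphXn /= horner_mx_X.
Qed.

Lemma mulmx_sandwich_left p q (D : 'M[A]_(p, q)) (N : 'M_p) (H : 'M_q) :
  D = N *m D *m H -> exists P : 'M_p, D = N *m P *m D.
Proof.
case: p N D => [|p] N D; first by exists 0; rewrite !flatmx0.
case: q H D => [|q] H D eqD; first by exists 0; rewrite !thinmx0.
have powD i : D = N ^+ i *m D *m H ^+ i.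
  elim: i => [|i IH]; first by rewrite !expr0 mul1mx mulmx1.
  by rewrite {1}IH {1}eqD exprSr exprS -!mulmxE !mulmxA.
have powD_le i : (i <= q.+1)%N -> N ^+ q.+1 *m D *m H ^+ i = N ^+ (q.+1 - i) *m D.
  move=> le_i; have -> : N ^+ q.+1 = N ^+ (q.+1 - i) * N ^+ i by rewrite -exprD subnK.
  rewrite -mulmxE -!mulmxA.
  by rewrite (mulmxA (N ^+ i)) -powD.
(* Multiply chi_H(H) = 0 on the left by N^(q+1) D: the monic top coefficient
   contributes D itself, every other term is N (...) D. *)
have CH := Cayley_Hamilton H.
rewrite horner_mx_coef size_char_poly in CH.
have := congr1 (mulmx (N ^+ q.+1 *m D)) CH.
rewrite mulmx0 mulmx_sumr big_ord_recr /= -scalemxAr powD_le // subnn expr0.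
have -> : (char_poly H)`_q.+1 = 1.
  by have := char_poly_monic H; rewrite monicE lead_coefE size_char_poly => /eqP.
rewrite scale1r mul1mx.
under eq_bigr => i _ do
  rewrite -scalemxAr powD_le ?(ltnW (ltn_ord i)) // -(subnSK (ltn_ord i)) exprS.
move=> /eqP; rewrite addrC addr_eq0 => /eqP defD.
exists (- \sum_(i < q.+1) (char_poly H)`_i *: N ^+ (q - i)).
rewrite {1}defD mulmxN mulNmx mulmx_sumr mulmx_suml; congr (- _).
by apply: eq_bigr => i _; rewrite -scalemxAr -scalemxAl mulmxE.
Qed.

Lemma unitmx_add_idempotents n (e p : 'M[A]_n) :
  e *m e = e -> p *m p = p -> p *m e = 0 -> e *m (1%:M - p) = 1%:M - p ->
  e + p \in unitmx.
Proof.
move=> ee pp pe e1p.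
have [] := @mulmx1_unit _ _ (e + p) ((1%:M - p) + (1%:M - e) *m p) => //.
rewrite mulmxDr (mulmxDl e p) e1p mulmxBr mulmx1 pp subrr addr0.
rewrite (mulmxDl e p) !mulmxA !mulmxBr !mulmx1 ee pe subrr mul0mx add0r.
by rewrite subr0 pp subrK.
Qed.

End MatrixLemmas.

Section RegularDifferentials.
Variables (A : comUnitRingType) (C : fcomplex A).

Definition bd_regular (k : int) :=
  exists s : 'M[A]_(rk C (k + 1), rk C k), bd C k *m s *m bd C k = bd C k.

Lemma acyclic_mx (hA : acyclic C) k c (M : 'M[A]_(rk C (k + 1), c)) :
  bd C k *m M = 0 -> exists W : 'M_(rk C (k + 1 + 1), c), M = bd C (k + 1) *m W.
Proof.
move=> HM.
have /fin_all_exists [w Hw] : forall j : 'I_c,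
    exists w : 'cV[A]_(rk C (k + 1 + 1)), col j M = bd C (k + 1) *m w.
  by move=> j; apply: hA; rewrite colE mulmxA HM mul0mx.
exists (\matrix_(i, j) w j i 0); apply/matrixP => i j.
move/matrixP: (Hw j) => /(_ i 0); rewrite !mxE => ->.
by apply: eq_bigr => l _; rewrite !mxE.
Qed.

Lemma dual_acyclic_mx (hD : dual_acyclic C) k r (M : 'M[A]_(r, rk C (k + 1))) :
  M *m bd C (k + 1) = 0 -> exists W : 'M_(r, rk C k), M = W *m bd C k.
Proof.
move=> HM.
have /fin_all_exists [w Hw] : forall i : 'I_r,
    exists w : 'rV[A]_(rk C k), row i M = w *m bd C k.
  by move=> i; apply: hD; rewrite -row_mul HM row0.
exists (\matrix_(i, j) w i 0 j); apply/matrixP => i j.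
move/matrixP: (Hw i) => /(_ 0 j); rewrite !mxE => ->.
by apply: eq_bigr => l _; rewrite !mxE.
Qed.

Lemma acyclic_complement_bd (hA : acyclic C) k (s : 'M[A]_(rk C (k + 1), rk C k)) :
  bd C k *m s *m bd C k = bd C k ->
  exists W : 'M_(rk C (k + 1 + 1), rk C (k + 1)), 1%:M - s *m bd C k = bd C (k + 1) *m W.
Proof.
by move=> Hs; apply: acyclic_mx => //; rewrite mulmxBr mulmx1 mulmxA Hs subrr.
Qed.

Lemma bd_regular_succ (hA : acyclic C) k : bd_regular k -> bd_regular (k + 1).
Proof.
case=> s /(acyclic_complement_bd hA) [W HW].
by exists W; rewrite -HW mulmxBl mul1mx -!mulmxA bd_sq mulmx0 subr0.
Qed.

Lemma bd_regular_pred (hD : dual_acyclic C) k : bd_regular (k + 1) -> bd_regular k.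
Proof.
case=> s Hs.
have [W HW] : exists W : 'M_(rk C (k + 1), rk C k),
    1%:M - bd C (k + 1) *m s = W *m bd C k.
  by apply: dual_acyclic_mx => //; rewrite mulmxBl mul1mx Hs subrr.
by exists W; rewrite -mulmxA -HW mulmxBr mulmx1 mulmxA bd_sq mul0mx subr0.
Qed.

Lemma bd_regular_all (hA : acyclic C) (hD : dual_acyclic C) m :
  bd_regular m -> forall k, bd_regular k.
Proof.
move=> Hm k; rewrite -(subrK m k) addrC.
elim/int_rec: (k - m) => [|n IH|n IH]; first by rewrite addr0.
  have -> : m + n.+1%:Z = m + n + 1 by lia.
  exact: bd_regular_succ.
apply: (@bd_regular_pred hD).
by have -> : m - n.+1%:Z + 1 = m - n%:Z by lia.
Qed.

Lemma bd_regular_of_contractible_at_succ m :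
  contractible_at_succ C m -> bd_regular m.
Proof.
case=> s' [s]; set h := bd C _ *m s' + _ => h_unit.
have dh : bd C m *m h = (bd C m *m s) *m bd C m.
  by rewrite mulmxDr mulmxA bd_sq mul0mx add0r mulmxA.
have [P HP] : exists P, bd C m = (bd C m *m s) *m P *m bd C m.
  by apply: (@mulmx_sandwich_left _ _ _ _ _ (invmx h)); rewrite -dh mulmxK.
by exists (s *m P); rewrite !mulmxA -HP.
Qed.

Lemma contractible_of_bd_regular (hA : acyclic C) :
  (forall k, bd_regular k) -> contractible C.
Proof.
move=> reg.
have regb k : exists s, bd C k *m s *m bd C k == bd C k.
  by have [s /eqP] := reg k; exists s.
exists (fun k => xchoose (regb k)) => m.
have /eqP Hs := xchooseP (regb m); have /eqP Hs' := xchooseP (regb (m + 1)).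
set s := xchoose _ in Hs *; set s' := xchoose _ in Hs' *.
have [W HW] := acyclic_complement_bd hA Hs.
apply: unitmx_add_idempotents.
- by rewrite mulmxA Hs'.
- by rewrite -mulmxA (mulmxA (bd C m)) Hs.
- by rewrite -mulmxA (mulmxA (bd C m)) bd_sq mul0mx mulmx0.
- by rewrite HW mulmxA Hs'.
Qed.

End RegularDifferentials.

Theorem mainTheorem3 (A : comUnitRingType) (hNoeth : noetherian A)
  (hloc : local_ring A) (C : fcomplex A) (hC : totally_acyclic C) :
  (exists n : int, contractible_at C n) <-> contractible C.
Proof.
case: hC => hA hD; split.
  case=> n /bd_regular_of_contractible_at_succ reg.
  exact/(contractible_of_bd_regular hA)/(bd_regular_all hA hD reg).
by case=> s Hs; exists 0, (s (0 - 1 + 1)), (s (0 - 1)); apply: Hs.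
Qed.
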